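(* Let $G$ be a torsion-free group, $\mathbb{F}$ a field, $\alpha$ a zero divisor in $\mathbb{F}[G]$ with $|supp(\alpha)|=4$ and $|S_\alpha|=10$, and $\beta$ a mate of $\alpha$. Let $B=supp(\alpha)$, $C=supp(\beta)$. If $s\in\Delta^i$ and $s'\in\Delta^j$ with $s\ne s'$ and $i,j\in\{3,4\}$, then $|\mathcal{V}(s)\cap\mathcal{V}(s')|\le2$.
   Context: $supp(\gamma)=\{x\in G:\gamma_x\ne0\}$; $S_\alpha=\{h^{-1}h':h\ne h',\ h,h'\in supp(\alpha)\}$. A mate of $\alpha$ is a non-zero $\beta$ with $\alpha\beta=0$ of minimal support size among all non-zero $\beta'$ with $\alpha\beta'=0$. $BC=\{bc:b\in B,c\in C\}$. For $s\in BC$, $R(s)=\{(b,c)\in B\times C:bc=s\}$, $r(s)=|R(s)|$; $\Delta^i=\{s\in BC:r(s)=i\}$; $\mathcal{V}(s)=\{g\in C:(sg^{-1},g)\in R(s)\}$. *)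

From HB Require Import structures.
From mathcomp Require Import all_boot all_order all_algebra.
From mathcomp Require Import finmap.
Set Implicit Arguments. Unset Strict Implicit. Unset Printing Implicit Defensive.
Import GRing.Theory.
Local Open Scope fset_scope.

Definition grpalg (G : groupType) (F : fieldType) := {fsfun G -> F with 0%R}.

Definition supp (G : groupType) (F : fieldType) (a : grpalg G F) : {fset G} := finsupp a.

Definition gmul (G : groupType) (F : fieldType) (a b : grpalg G F) (x : G) : F :=
  (\sum_(h <- supp a) a h * b (h^-1 * x)%g)%R.

Definition torsion_free (G : groupType) : Prop :=
  forall (g : G) (n : nat), (0 < n)%N -> (g ^+ n)%g = 1%g -> g = 1%g.

Definition nonzero (G : groupType) (F : fieldType) (a : grpalg G F) : Prop :=
  exists x : G, a x != 0%R.

Definition annihilates (G : groupType) (F : fieldType) (a b : grpalg G F) : Prop :=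
  forall x : G, gmul a b x = 0%R.

Definition zero_divisor (G : groupType) (F : fieldType) (a : grpalg G F) : Prop :=
  nonzero a /\ exists b : grpalg G F, nonzero b /\ annihilates a b.

Definition is_mate (G : groupType) (F : fieldType) (a b : grpalg G F) : Prop :=
  [/\ nonzero b, annihilates a b &
     forall b' : grpalg G F, nonzero b' -> annihilates a b' ->
       (#|` supp b| <= #|` supp b'|)%N].

Definition S_of (G : groupType) (F : fieldType) (a : grpalg G F) : {fset G} :=
  [fset (h^-1 * h')%g | h in supp a, h' in supp a & h != h'].

Definition prodset (G : groupType) (B C : {fset G}) : {fset G} :=
  [fset (b * c)%g | b in B, c in C].

Definition Rset (G : groupType) (B C : {fset G}) (s : G) : {fset G * G} :=
  [fset p in B `*` C | (p.1 * p.2)%g == s].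

Definition rcount (G : groupType) (B C : {fset G}) (s : G) : nat := #|` Rset B C s|.

Definition Delta (G : groupType) (B C : {fset G}) (i : nat) : {fset G} :=
  [fset s in prodset B C | rcount B C s == i].

Definition Vset (G : groupType) (B C : {fset G}) (s : G) : {fset G} :=
  [fset g in C | (s * g^-1, g)%g \in Rset B C s].

From HB Require Import structures.
From mathcomp Require Import all_boot all_order all_algebra.
From mathcomp Require Import finmap.

(* Write t = s' s^-1, which is not 1.  Every g in V(s) and V(s') gives
   b = s g^-1 in B with t b = s' g^-1 in B, so three common elements would
   leave at most one b in B with t b outside B.  Since t has infinite order,
   such a set is a progression {a, t a, t^2 a, t^3 a}, and then every h^-1 h'
   with h <> h' in B is a^-1 t^m a or its inverse for some 1 <= m <= 3:
   |S_alpha| <= 6 < 10. *)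

Set Implicit Arguments.
Unset Strict Implicit.
Unset Printing Implicit Defensive.

Local Open Scope fset_scope.
Local Open Scope group_scope.

Definition ends (G : groupType) (t : G) (B : {fset G}) : {fset G} :=
  [fset b in B | t * b \notin B].

Lemma in_ends (G : groupType) (t : G) (B : {fset G}) b :
  (b \in ends t B) = (b \in B) && (t * b \notin B).
Proof. by rewrite inE. Qed.

Lemma ends_sub (G : groupType) (t : G) (B : {fset G}) : ends t B `<=` B.
Proof. by apply/fsubsetP => b; rewrite in_ends => /andP[]. Qed.

Section TorsionFree.

Variables (G : groupType) (t : G).
Hypotheses (tfG : torsion_free G) (t_neq1 : t != 1).

Lemma expg_inj : injective (fun n => t ^+ n).
Proof.
suff le_inj m n : m <= n -> t ^+ m = t ^+ n -> m = n.
  by move=> m n /= e; case: (leqP m n) => [|/ltnW] le; [|symmetry]; apply: le_inj.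
move=> le_mn e; apply/eqP; rewrite eqn_leq le_mn /= -subn_eq0.
apply: contraR t_neq1; rewrite -lt0n => pos; apply/eqP/(tfG pos).
by rewrite expgnFr // e mulgV.
Qed.

Lemma ends_neq0 (B : {fset G}) : B != fset0 -> ends t B != fset0.
Proof.
case/fset0Pn => b bB; apply/negP => /eqP ends0.
have stable c : c \in B -> t * c \in B.
  by move=> cB; apply: contraFT (in_fset0 c) => tcB; rewrite -ends0 in_ends cB.
have orbit n : t ^+ n * b \in B.
  by elim: n => [|n IHn]; rewrite ?mul1g // expgS -mulgA stable.
have orbit_uniq : uniq [seq t ^+ n * b | n <- iota 0 #|` B|.+1].
  by rewrite map_inj_uniq ?iota_uniq // => m n /mulIg /expg_inj.
suff orbit_sub : {subset [seq t ^+ n * b | n <- iota 0 #|` B|.+1] <= B}.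
  by have := uniq_leq_size orbit_uniq orbit_sub; rewrite size_map size_iota ltnn.
by move=> _ /mapP[n _ ->]; apply: orbit.
Qed.

(* Induction step: removing the unique end [e] of [B] leaves [t^-1 e] as the
   unique end of [B `\ e]. *)
Lemma progression_of_ends_le1 n (B : {fset G}) :
  #|` B| = n.+1 -> #|` ends t B| <= 1 ->
  exists a, forall b, b \in B -> exists2 k, k <= n & b = t ^+ k * a.
Proof.
elim: n B => [|n IHn] B cardB ends_le1.
  have /cardfs1P[a ->] : #|` B| == 1%N by rewrite cardB.
  exists a => b /[!inE] /eqP ->.
  by exists 0; rewrite ?mul1g.
have /fset0Pn[e eE] : ends t B != fset0.
  by apply: ends_neq0; rewrite -cardfs_gt0 cardB.
have end_uniq b : b \in ends t B -> b = e.
  move=> bE; apply/eqP; apply: contraLR ends_le1 => neq_be.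
  have sub : [fset b; e] `<=` ends t B.
    by apply/fsubsetP => c; rewrite in_fset2 => /orP[] /eqP ->.
  by rewrite -ltnNge (leq_trans _ (fsubset_leq_card sub)) // cardfs2 neq_be.
have eB : e \in B by rewrite (fsubsetP (ends_sub t B)).
set B' := B `\ e.
have succ_e b : b \in ends t B' -> t * b = e.
  rewrite !inE => /andP[/andP[neq_be bB]].
  rewrite negb_and negbK => /orP[/eqP //|tbB].
  have bE : b \in ends t B by rewrite in_ends bB.
  by move: neq_be; rewrite (end_uniq b bE) eqxx.
have card_B' : #|` B'| = n.+1.
  by apply/eqP; rewrite -eqSS -cardB (cardfsD1 e B) eB.
have ends_B'_sub : ends t B' `<=` [fset t^-1 * e].
  by apply/fsubsetP => b /succ_e <-; rewrite mulKg inE.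
have ends_B'_le1 : #|` ends t B'| <= 1.
  by rewrite (leq_trans (fsubset_leq_card ends_B'_sub)) ?cardfs1.
have [a prog'] := IHn B' card_B' ends_B'_le1.
have /fset0Pn[b' b'E] : ends t B' != fset0.
  by apply: ends_neq0; rewrite -cardfs_gt0 card_B'.
have [k le_kn def_b'] := prog' b' (fsubsetP (ends_sub t B') _ b'E).
exists a => b bB; have [-> | neq_be] := eqVneq b e.
  by exists k.+1; rewrite // -(succ_e _ b'E) def_b' expgS mulgA.
have bB' : b \in B' by rewrite in_fsetD1 neq_be.
have [l le_ln ->] := prog' b bB'.
by exists l; rewrite // (leq_trans le_ln).
Qed.

End TorsionFree.

Lemma card_S_of_progression (G : groupType) (F : fieldType) (alpha : grpalg G F)
    (t a : G) n :
  (forall b, b \in supp alpha -> exists2 k, k <= n & b = t ^+ k * a) ->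
  #|` S_of alpha| <= n.*2.
Proof.
move=> prog.
set D := [fset a^-1 * t ^+ m * a | m in iota 1 n].
have card_D : #|` D| <= n.
  apply: leq_trans (leq_imfset_card _ _ _) _.
  by rewrite /= (leq_trans (size_undup _)) ?size_iota.
have diffD k l : k < l -> l <= n -> (t ^+ k * a)^-1 * (t ^+ l * a) \in D.
  move=> lt_kl le_ln; rewrite -(subnKC (ltnW lt_kl)); apply/imfsetP; exists (l - k).
    rewrite /= mem_iota subn_gt0 lt_kl add1n ltnS.
    exact: leq_trans (leq_subr _ _) le_ln.
  by rewrite expgnDr invgM !mulgA mulgVK.
have sub : S_of alpha `<=` D `|` [fset x^-1 | x in D].
  apply/fsubsetP => _ /imfset2P[h hB [h' /[!inE] /andP[h'B neq_hh'] ->]].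
  have [k le_kn def_h] := prog h hB; have [l le_ln def_h'] := prog h' h'B.
  rewrite def_h def_h'; case: (ltngtP k l) => [lt_kl|lt_lk|eq_kl].
  - by rewrite diffD.
  - apply/orP; right; apply/imfsetP; exists ((t ^+ l * a)^-1 * (t ^+ k * a)).
      exact: diffD.
    by rewrite [RHS]invgM invgK.
  - by move: neq_hh'; rewrite def_h def_h' eq_kl eqxx.
apply: leq_trans (fsubset_leq_card sub) _.
rewrite (leq_trans (leq_card_fsetU _ _)) // -addnn leq_add //.
exact: leq_trans (leq_imfset_card _ _ _) _.
Qed.

Lemma Vset_mulV (G : groupType) (B C : {fset G}) s g :
  g \in Vset B C s -> s * g^-1 \in B.
Proof. by rewrite !inE /= => /and3P[_ /andP[]]. Qed.

(* [g |-> s g^-1] maps [V(s) `&` V(s')] injectively into [B `\` ends (s' s^-1) B]. *)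
Lemma card_Vset_meet (G : groupType) (B C : {fset G}) s s' :
  #|` Vset B C s `&` Vset B C s'| <= #|` B| - #|` ends (s' * s^-1) B|.
Proof.
set V := Vset B C s `&` Vset B C s'.
have inj_sV : injective (fun g => s * g^-1) by move=> g g' /mulgI /invg_inj.
have -> : #|` V| = #|` [fset s * g^-1 | g in V]|.
  by rewrite [RHS](card_imfset _ _ inj_sV).
rewrite -(cardfsDS (ends_sub _ B)); apply: fsubset_leq_card.
apply/fsubsetP => _ /imfsetP[g /= /[!in_fsetI] /andP[gV gV'] ->]; rewrite !inE.
by rewrite (Vset_mulV gV) -mulgA mulKg (Vset_mulV gV').
Qed.

Theorem mainTheorem18 (G : groupType) (F : fieldType) (alpha beta : grpalg G F)
    (s s' : G) (i j : nat) :
  torsion_free G ->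
  zero_divisor alpha ->
  #|` supp alpha| = 4%N ->
  #|` S_of alpha| = 10%N ->
  is_mate alpha beta ->
  s \in Delta (supp alpha) (supp beta) i ->
  s' \in Delta (supp alpha) (supp beta) j ->
  s != s' ->
  i \in [:: 3%N; 4%N] ->
  j \in [:: 3%N; 4%N] ->
  (#|` Vset (supp alpha) (supp beta) s `&` Vset (supp alpha) (supp beta) s'| <= 2)%N.
Proof.
move=> tfG _ cardB cardS _ _ _ neq_ss' _ _.
have t_neq1 : s' * s^-1 != 1 by rewrite divg_eq1 eq_sym.
have ends_ge2 : 2 <= #|` ends (s' * s^-1) (supp alpha)|.
  rewrite ltnNge; apply/negP => /(progression_of_ends_le1 tfG t_neq1 cardB)[a prog].
  by have := card_S_of_progression prog; rewrite cardS.
by rewrite (leq_trans (card_Vset_meet _ _ _ _)) // cardB leq_subLR -addn2 leq_add2r.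
Qed.
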